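(* Let $d\ge 1$, let $D\subset\mathbb{R}^d$ be Lebesgue measurable, let $r>0$ and let $f:D\to\mathbb{R}$ be any function. Then the function $osc_r f:D\to[0,\infty]$, $$(osc_r f)(x):=\sup_{y\in B_r(x)\cap D} f(y)-\inf_{y\in B_r(x)\cap D} f(y),$$ is Lebesgue measurable.
   Context: $B_r(x):=\{y\in\mathbb{R}^d: |y-x|<r\}$ denotes the open Euclidean ball of radius $r$ centred at $x$. *)

From HB Require Import structures.
From mathcomp Require Import all_boot all_order all_algebra.
From mathcomp Require Import all_classical all_reals all_analysis.
From mathcomp Require Import measurable_realfun.
Set Implicit Arguments. Unset Strict Implicit. Unset Printing Implicit Defensive.
Import Order.TTheory GRing.Theory Num.Theory.
Local Open Scope classical_set_scope.
Local Open Scope ring_scope.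

(* Points of R^d are row vectors 'rV[R]_d; coordinate i of x is x ord0 i. *)

Definition edist (R : realType) (d : nat) (x y : 'rV[R]_d) : R :=
  Num.sqrt (\sum_(i < d) (y ord0 i - x ord0 i) ^+ 2).

Definition eball (R : realType) (d : nat) (x : 'rV[R]_d) (r : R) : set 'rV[R]_d :=
  [set y | edist x y < r].

Definition obox (R : realType) (d : nat) (a b : 'rV[R]_d) : set 'rV[R]_d :=
  [set x | forall i : 'I_d, a ord0 i < x ord0 i /\ x ord0 i < b ord0 i].

Definition bvol (R : realType) (d : nat) (a b : 'rV[R]_d) : R :=
  \prod_(i < d) Num.max (b ord0 i - a ord0 i) 0.

Definition lebesgue_outer (R : realType) (d : nat) (A : set 'rV[R]_d) : \bar R :=
  ereal_inf [set s : \bar R | exists a b : nat -> 'rV[R]_d,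
    A `<=` \bigcup_k obox (a k) (b k) /\
    s = (\sum_(0 <= k <oo) (bvol (a k) (b k))%:E)%E].

Definition Lmeasurable (R : realType) (d : nat) (A : set 'rV[R]_d) : Prop :=
  (@lebesgue_outer R d).-caratheodory A.

Definition osc (R : realType) (d : nat) (D : set 'rV[R]_d) (r : R)
  (f : 'rV[R]_d -> R) (x : 'rV[R]_d) : \bar R :=
  (ereal_sup [set (f y)%:E | y in eball x r `&` D]
   - ereal_inf [set (f y)%:E | y in eball x r `&` D])%E.

From Pilot Require Import Defs.
From HB Require Import structures.
From mathcomp Require Import all_boot all_order all_algebra.
From mathcomp Require Import all_classical all_reals all_analysis.
From mathcomp Require Import measurable_realfun.
From mathcomp Require Import ring lra.
Set Implicit Arguments. Unset Strict Implicit. Unset Printing Implicit Defensive.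
Import Order.TTheory GRing.Theory Num.Theory numFieldNormedType.Exports.
Local Open Scope classical_set_scope.
Local Open Scope ring_scope.

(* For real t, the points x of D with osc_r f x > t are those for which two
   values f y, f z with y, z in B_r(x) /\ D differ by more than t, i.e. the
   points of D lying in the union W_t of the sets B_r(y) /\ B_r(z) over such
   pairs. W_t is open, hence a countable union of boxes with rational corners.
   A box is a finite intersection of coordinate half-spaces, and a half-space
   is Caratheodory measurable: it cuts every box of a cover into two boxes whose
   volumes add up, the hyperplane in between being null. As the rays ]t, +oo]
   generate the Borel sets of the extended reals, osc_r f is measurable on D. *)

Lemma maxr0_cut (R : realFieldType) (x y c : R) :
  Num.max (y - Num.max x c) 0 + Num.max (Num.min y c - x) 0 = Num.max (y - x) 0.
Proof.
case: (ltP x c) => ?; case: (ltP y c) => ?; case: (ltP (y - c) 0) => ?;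
  case: (ltP (y - x) 0) => ?; case: (ltP (c - x) 0) => ?; lra.
Qed.

Lemma sqrD_le (R : realFieldType) (u e rho : R) : `|e| < rho -> rho <= 1 ->
  (u + e) ^+ 2 <= u ^+ 2 + rho * (2 * `|u| + 1).
Proof.
move=> erho rho1.
have ue : u * e <= `|u| * rho.
  by rewrite (le_trans (ler_norm _)) // normrM ler_wpM2l // ltW.
have ee : e ^+ 2 <= rho.
  rewrite -real_normK ?num_real // expr2 (le_trans _ (ltW erho)) //.
  by rewrite ler_piMr // (le_trans (ltW erho)).
have -> : (u + e) ^+ 2 = u ^+ 2 + 2 * (u * e) + e ^+ 2 by ring.
lra.
Qed.

Lemma lte_sup_sub_inf (R : realType) (T : Type) (g : T -> R) (S : set T)
    (t : R) : S !=set0 ->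
  (t%:E < ereal_sup [set (g y)%:E | y in S] -
           ereal_inf [set (g y)%:E | y in S])%E
  <-> exists y z, S y /\ S z /\ t < g y - g z.
Proof.
move=> [x Sx]; split => [|[y [z [Sy [Sz tyz]]]]]; last first.
  apply: (@lt_le_trans _ _ (g y - g z)%:E); first by rewrite lte_fin.
  rewrite EFinB; apply: leeB.
    by apply: ereal_sup_ubound; exists y.
  by apply: ereal_inf_lbound; exists z.
rewrite ltNge => /negP; apply: contra_notP => /forallNP small.
(* if no two values differ by more than [t], then [sup <= inf + t] *)
have le_t y z : S y -> S z -> g y - g z <= t.
  by move=> Sy Sz; rewrite leNgt; apply/negP => lt; apply: (small y); exists z.
have sup_le z : S z -> (ereal_sup [set (g y)%:E | y in S] <= (t + g z)%:E)%E.
  move=> Sz; apply: ge_ereal_sup => _ [y Sy <-].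
  by rewrite lee_fin; have := le_t y z Sy Sz; lra.
have : ((g x)%:E <= ereal_sup [set (g y)%:E | y in S])%E.
  by apply: ereal_sup_ubound; exists x.
move: (sup_le x Sx); case: (ereal_sup _) sup_le => [s||] // sup_le _ _.
have : ((s - t)%:E <= ereal_inf [set (g y)%:E | y in S])%E.
  apply: le_ereal_inf_tmp => _ [z Sz <-].
  by have := sup_le z Sz; rewrite !lee_fin; lra.
by move=> /(leeB (lexx s%:E)) /le_trans; apply; rewrite -EFinB lee_fin; lra.
Qed.

Section boxes.
Variables (R : realType) (d : nat).
Local Notation V := 'rV[R]_d.
Implicit Types (a b c : V).

Definition box_center a b : V := \row_j ((a ord0 j + b ord0 j) / 2).

Definition row_upd c (i : 'I_d) (v : R) : V :=
  \row_j (if j == i then v else c ord0 j).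

Lemma row_upd_eq c i v : row_upd c i v ord0 i = v.
Proof. by rewrite mxE eqxx. Qed.

Lemma row_upd_neq c i j v : j != i -> row_upd c i v ord0 j = c ord0 j.
Proof. by rewrite mxE => /negbTE ->. Qed.

Lemma bvol_ge0 a b : 0 <= bvol a b.
Proof. by apply: prodr_ge0 => i _; rewrite le_max lexx orbT. Qed.

Lemma bvol_eq0 a b i : b ord0 i <= a ord0 i -> bvol a b = 0.
Proof.
move=> ba; rewrite /bvol (bigD1 i) //= (_ : Num.max _ _ = 0) ?mul0r //.
by apply/max_idPr; rewrite subr_le0.
Qed.

Lemma bvol_coord a b i : bvol a b = Num.max (b ord0 i - a ord0 i) 0 *
  \prod_(j | j != i) Num.max (b ord0 j - a ord0 j) 0.
Proof. by rewrite /bvol (bigD1 i). Qed.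

Lemma bvol_row_upd a b i u v : bvol (row_upd a i u) (row_upd b i v) =
  Num.max (v - u) 0 * \prod_(j | j != i) Num.max (b ord0 j - a ord0 j) 0.
Proof.
rewrite (bvol_coord _ _ i) !row_upd_eq; congr (_ * _).
by apply: eq_bigr => j ji; rewrite !row_upd_neq.
Qed.

Lemma bvol_thin a b i (c e : R) : 0 < e ->
  exists2 del, 0 < del &
    bvol (row_upd a i (c - del)) (row_upd b i (c + del)) <= e.
Proof.
move=> e0; pose M := \prod_(j | j != i) Num.max (b ord0 j - a ord0 j) 0.
have M0 : 0 <= M by apply: prodr_ge0 => j _; rewrite le_max lexx orbT.
pose del := e / (2 * (M + 1)).
have del0 : 0 < del by rewrite divr_gt0 // mulr_gt0 // ltr_wpDl.
exists del; rewrite // bvol_row_upd -/M.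
have -> : c + del - (c - del) = 2 * del by ring.
have -> : e = 2 * del * (M + 1) by rewrite /del; field; lra.
by rewrite max_l ?ler_wpM2l ?lerDl //; lra.
Qed.

Lemma obox_center a b : (forall i, a ord0 i < b ord0 i) ->
  obox a b (box_center a b).
Proof. by move=> ab i; rewrite mxE; have := ab i; split; lra. Qed.

Lemma obox_row_upd a b c i v : obox a b c -> a ord0 i < v < b ord0 i ->
  obox a b (row_upd c i v).
Proof.
move=> abc /andP[av vb] j; have [->|ji] := eqVneq j i.
  by rewrite row_upd_eq.
by rewrite row_upd_neq //; exact: abc.
Qed.

Lemma obox_subset_bounds a b a' b' : (forall i, a ord0 i < b ord0 i) ->
  obox a b `<=` obox a' b' ->
  forall i, a' ord0 i <= a ord0 i /\ b ord0 i <= b' ord0 i.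
Proof.
move=> ab sub i; have ab_c := obox_center ab; have abi := ab i.
(* Otherwise, moving the center along coordinate [i] leaves [obox a' b']. *)
split; rewrite leNgt; apply/negP => lt.
- pose m := Num.min (a' ord0 i) (b ord0 i).
  have am : a ord0 i < m by rewrite lt_min lt abi.
  have [mb ma] : m <= b ord0 i /\ m <= a' ord0 i by rewrite !ge_min !lexx orbT.
  have mid : a ord0 i < (a ord0 i + m) / 2 < b ord0 i by apply/andP; split; lra.
  have /(_ i)[+ _] := sub _ (obox_row_upd ab_c mid).
  rewrite row_upd_eq; lra.
- pose m := Num.max (b' ord0 i) (a ord0 i).
  have mb : m < b ord0 i by rewrite gt_max lt abi.
  have [am bm] : a ord0 i <= m /\ b' ord0 i <= m by rewrite !le_max !lexx orbT.
  have mid : a ord0 i < (b ord0 i + m) / 2 < b ord0 i by apply/andP; split; lra.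
  have /(_ i)[_] := sub _ (obox_row_upd ab_c mid).
  rewrite row_upd_eq; lra.
Qed.

Lemma bvol_obox_eq a b a' b' :
  obox a b = obox a' b' -> bvol a b = bvol a' b'.
Proof.
move=> e.
have [ab|] := pselect (forall i, a ord0 i < b ord0 i); last first.
  move=> /existsNP[i /negP]; rewrite -leNgt => ba; rewrite (bvol_eq0 ba).
  have [ab'|/existsNP[j /negP]] := pselect (forall i, a' ord0 i < b' ord0 i).
    by have := obox_center ab'; rewrite -e => /(_ i)[]; lra.
  by rewrite -leNgt => ba'; rewrite (bvol_eq0 ba').
have ab' i : a' ord0 i < b' ord0 i.
  by have := obox_center ab; rewrite e => /(_ i)[]; lra.
have /seteqP[sub sup] := e.
have le := obox_subset_bounds ab sub; have ge := obox_subset_bounds ab' sup.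
rewrite /bvol; apply: eq_bigr => i _.
by have [? ?] := le i; have [? ?] := ge i; congr (Num.max (_ - _) _); lra.
Qed.

Lemma bvol_cut a b i (c : R) : bvol (row_upd a i (Num.max (a ord0 i) c)) b +
  bvol a (row_upd b i (Num.min (b ord0 i) c)) = bvol a b.
Proof.
rewrite !(bvol_coord _ _ i) !row_upd_eq.
under eq_bigr => j ji do rewrite row_upd_neq //.
under [X in _ + _ * X]eq_bigr => j ji do rewrite row_upd_neq //.
by rewrite -mulrDl maxr0_cut.
Qed.

Lemma exists_obox_cube (x : V) : exists k : nat,
  obox (const_mx (- k%:R)) (const_mx k%:R) x.
Proof.
pose S := \sum_j `|x ord0 j|.
have S0 : 0 <= S by apply: sumr_ge0.
exists (Num.bound S) => j; rewrite !mxE.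
have : `|x ord0 j| < (Num.bound S)%:R.
  apply: le_lt_trans (archi_boundP S0).
  by rewrite /S (bigD1 j) //= lerDl sumr_ge0.
by rewrite ltr_norml => /andP[].
Qed.

End boxes.

Section lebesgue_outer_measure.
Variables (R : realType) (n : nat).
Local Notation V := 'rV[R]_n.+1.
Local Open Scope ereal_scope.

(* Dimension 0 is excluded: there the only box is the whole one-point space,
   of volume 1, and [lebesgue_outer] is no outer measure. *)
Lemma obox0 : obox (0 : V) 0 = set0.
Proof. by apply/seteqP; split => // x /(_ ord0) []; rewrite mxE; lra. Qed.

Local Notation T := (g_sigma_algebraType (@setT (set V))).

(* All sets are measurable in [T], so [mu_ext box_content] ranges over covers
   by arbitrary sets, of which only covers by boxes have finite content. *)
Definition box_content (A : set T) : \bar R :=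
  ereal_inf [set (bvol ab.1 ab.2)%:E |
    ab in [set ab : V * V | A = obox ab.1 ab.2]].

Lemma box_content_obox (a b : V) : box_content (obox a b) = (bvol a b)%:E.
Proof.
rewrite /box_content.
rewrite (_ : [set _ | _ in _] = [set (bvol a b)%:E]) ?ereal_inf1 //.
apply/seteqP; split => [_ [[a' b'] /= e <-]|_ ->]; last by exists (a, b).
by rewrite /= (bvol_obox_eq e).
Qed.

Lemma box_content0 : box_content set0 = 0.
Proof. by rewrite -obox0 box_content_obox (bvol_eq0 (i := ord0)) // mxE. Qed.

Lemma box_content_ge0 (A : set T) : 0 <= box_content A.
Proof. by apply: le_ereal_inf_tmp => _ [ab _ <-]; rewrite lee_fin bvol_ge0. Qed.

Lemma box_content_fin (A : set T) : box_content A != +oo ->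
  exists ab : V * V, A = obox ab.1 ab.2.
Proof.
apply: contraNP => /forallNP noBox; rewrite /box_content.
rewrite (_ : [set _ | _ in _] = set0) ?ereal_inf0 //.
by apply/seteqP; split => // _ [ab /= e _]; case: (noBox ab).
Qed.

Lemma lebesgue_outer_mu_ext (X : set V) :
  lebesgue_outer X = mu_ext box_content X.
Proof.
apply/eqP; rewrite eq_le; apply/andP; split.
- apply: le_ereal_inf_tmp => _ [F [_ XF] <-].
  have [[k Fk]|/forallNP Ffin] := pselect (exists k, box_content (F k) = +oo).
    by rewrite (eseries_pinfty _ _ Fk) ?leey // => m _; rewrite gt_eqF //
      (lt_le_trans _ (box_content_ge0 _)) ?ltNyr.
  have /choice[ab Fab] k : exists ab : V * V, F k = obox ab.1 ab.2.
    exact/box_content_fin/eqP/Ffin.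
  rewrite (eq_eseriesr (fun k _ => congr1 box_content (Fab k))).
  rewrite (eq_eseriesr (fun k _ => box_content_obox _ _)).
  apply: ereal_inf_lbound; exists (fun k => (ab k).1), (fun k => (ab k).2).
  by split => // x /XF[k _ Fkx]; exists k => //; rewrite -Fab.
- apply: le_ereal_inf_tmp => _ [a [b [Xab ->]]].
  apply: ereal_inf_lbound; exists (fun k => obox (a k) (b k)).
    by split => // k; exact: sub_sigma_algebra.
  by apply: eq_eseriesr => k _; exact: box_content_obox.
Qed.

Let lebesgue_outerE : @lebesgue_outer R n.+1 = mu_ext box_content.
Proof. exact/funext/lebesgue_outer_mu_ext. Qed.

Lemma lebesgue_outer0 : lebesgue_outer (set0 : set V) = 0.
Proof. by rewrite lebesgue_outerE (mu_ext0 box_content0 box_content_ge0). Qed.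

Lemma lebesgue_outer_ge0 (X : set V) : 0 <= lebesgue_outer X.
Proof. by rewrite lebesgue_outerE (mu_ext_ge0 box_content_ge0). Qed.

Lemma le_lebesgue_outer :
  {homo @lebesgue_outer R n.+1 : A B / A `<=` B >-> A <= B}.
Proof. by move=> A B AB; rewrite !lebesgue_outer_mu_ext; exact: le_mu_ext. Qed.

Lemma lebesgue_outer_sigma_subadditive :
  sigma_subadditive (@lebesgue_outer R n.+1).
Proof.
by rewrite lebesgue_outerE; exact: (mu_ext_sigma_subadditive box_content_ge0).
Qed.

End lebesgue_outer_measure.

HB.instance Definition _ (R : realType) (n : nat) :=
  isOuterMeasure.Build R 'rV[R]_n.+1 (@lebesgue_outer R n.+1)
   (@lebesgue_outer0 R n) (@lebesgue_outer_ge0 R n)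
   (@le_lebesgue_outer R n) (@lebesgue_outer_sigma_subadditive R n).

Lemma caratheodory_null (R : realType) (T : Type)
  (mu : {outer_measure set T -> \bar R}) (A : set T) :
  mu A = 0%E -> mu.-caratheodory A.
Proof.
move=> muA0; apply: le_caratheodory_measurable => X.
have -> : mu (X `&` A) = 0%E.
  by apply/eqP; rewrite eq_le outer_measure_ge0 andbT -muA0 le_outer_measure.
by rewrite add0e le_outer_measure.
Qed.

Section measurable_boxes.
Variables (R : realType) (n : nat).
Local Notation V := 'rV[R]_n.+1.
Local Notation mu := (@lebesgue_outer R n.+1).
Local Open Scope ereal_scope.
Implicit Types (a b : V) (i : 'I_n.+1) (c : R).

Definition coord_hyperplane i c : set V := [set x | x ord0 i = c].
Definition coord_halfspace i c : set V := [set x | (c < x ord0 i)%R].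

Lemma lebesgue_outer_cover (X : set V) (a b : nat -> V) :
  X `<=` \bigcup_k obox (a k) (b k) ->
  mu X <= \sum_(k <oo) (bvol (a k) (b k))%:E.
Proof. by move=> Xab; apply: ereal_inf_lbound; exists a, b. Qed.

Lemma lebesgue_outer_obox a b : mu (obox a b) <= (bvol a b)%:E.
Proof.
pose a' k : V := if k == 0%N then a else 0%R.
pose b' k : V := if k == 0%N then b else 0%R.
apply: le_trans (lebesgue_outer_cover (a := a') (b := b') _) _.
  by move=> x abx; exists 0%N.
rewrite nneseries_recl //; last by move=> k _; rewrite lee_fin bvol_ge0.
rewrite eseries0 ?adde0 // => -[//|k] _ _.
by rewrite /a' /b' /= (bvol_eq0 (i := ord0)) // mxE.
Qed.

Lemma lebesgue_outer_eq0 (X : set V) :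
  (forall e : R, (0 < e)%R -> mu X <= e%:E) -> mu X = 0.
Proof.
move=> Xe; apply/eqP; rewrite eq_le lebesgue_outer_ge0 andbT.
by apply/lee_addgt0Pr => e e0; rewrite add0e; exact: Xe.
Qed.

Lemma hyperplane_obox_null i c a b :
  mu (coord_hyperplane i c `&` obox a b) = 0.
Proof.
apply: lebesgue_outer_eq0 => e e0.
have [del del0 thin] := @bvol_thin _ _ a b i c e e0.
have sub : coord_hyperplane i c `&` obox a b `<=`
    obox (row_upd a i (c - del)%R) (row_upd b i (c + del)%R).
  move=> x [/= xc abx] j; have [->|ji] := eqVneq j i.
    by rewrite !row_upd_eq xc; split; lra.
  by rewrite !row_upd_neq //; exact: abx.
apply: le_trans (le_lebesgue_outer sub) _.
by apply: le_trans (lebesgue_outer_obox _ _) _; rewrite lee_fin.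
Qed.

Lemma hyperplane_null i c : mu (coord_hyperplane i c) = 0.
Proof.
pose P k := coord_hyperplane i c `&`
  obox (const_mx (- k%:R)%R) (const_mx k%:R).
have cover : coord_hyperplane i c `<=` \bigcup_k P k.
  by move=> x xc; have [k ?] := exists_obox_cube x; exists k.
apply/eqP; rewrite eq_le lebesgue_outer_ge0 andbT.
apply: le_trans (le_lebesgue_outer cover) _.
apply: le_trans (lebesgue_outer_sigma_subadditive _) _.
by rewrite eseries0 // => k _ _; exact: hyperplane_obox_null.
Qed.

Lemma hyperplane_measurable i c : mu.-cara.-measurable (coord_hyperplane i c).
Proof. exact/caratheodory_null/hyperplane_null. Qed.

Lemma halfspace_measurable i c : mu.-cara.-measurable (coord_halfspace i c).
Proof.
apply: le_caratheodory_measurable => X.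
apply: le_ereal_inf_tmp => _ [a [b [Xab ->]]].
pose a' k := row_upd (a k) i (Num.max (a k ord0 i) c).
pose b' k := row_upd (b k) i (Num.min (b k ord0 i) c).
have upper :
    mu (X `&` coord_halfspace i c) <= \sum_(k <oo) (bvol (a' k) (b k))%:E.
  apply: lebesgue_outer_cover => x [/Xab[k _ abx] /= cx].
  exists k => // j; have [->|ji] := eqVneq j i.
    by rewrite row_upd_eq gt_max cx; have [-> ->] := abx i.
  by rewrite row_upd_neq //; exact: abx.
have lower :
    mu (X `&` ~` coord_halfspace i c) <= \sum_(k <oo) (bvol (a k) (b' k))%:E.
  have sub : X `&` ~` coord_halfspace i c `<=`
      \bigcup_k obox (a k) (b' k) `|` coord_hyperplane i c.
    move=> x [/Xab[k _ abx] /negP]; rewrite -leNgt le_eqVlt => /predU1P[xc|xc].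
      by right.
    left; exists k => // j; have [->|ji] := eqVneq j i.
      by rewrite row_upd_eq lt_min xc; have [-> ->] := abx i.
    by rewrite row_upd_neq //; exact: abx.
  apply: le_trans (le_lebesgue_outer sub) _.
  apply: le_trans (outer_measureU2 _ _ _) _ => /=.
  by rewrite hyperplane_null adde0; exact: lebesgue_outer_cover.
apply: le_trans (leeD upper lower) _.
rewrite -nneseriesD; try by move=> k _ _; rewrite lee_fin bvol_ge0.
by under eq_eseriesr => k _ do rewrite -EFinD bvol_cut.
Qed.

Lemma coord_lt_measurable i c :
  mu.-cara.-measurable [set x : V | (x ord0 i < c)%R].
Proof.
have -> : [set x : V | (x ord0 i < c)%R] =
    ~` ([set x | (c < x ord0 i)%R] `|` [set x | x ord0 i = c]).
  apply/seteqP; split => x /=; first by move=> xc [|]; lra.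
  by move=> /not_orP[/negP]; rewrite -leNgt le_eqVlt => /predU1P[].
apply/measurableC/measurableU; first exact: halfspace_measurable.
exact: hyperplane_measurable.
Qed.

Lemma obox_measurable (a b : V) : mu.-cara.-measurable (obox a b).
Proof.
have -> : obox a b = \bigcap_(i in [set: 'I_n.+1])
    (coord_halfspace i (a ord0 i) `&` [set x | (x ord0 i < b ord0 i)%R]).
  by apply/seteqP; split => [x abx i _|x abx i]; [exact: abx | exact: abx].
apply: fin_bigcap_measurable; first exact: finite_finset.
move=> i _; apply: measurableI; first exact: halfspace_measurable.
exact: coord_lt_measurable.
Qed.

End measurable_boxes.

Section open_sets.
Variables (R : realType) (d : nat).
Local Notation V := 'rV[R]_d.

Definition cube_open (W : set V) := forall x, W x -> exists2 rho : R, 0 < rho &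
  forall w : V, (forall j, `|w ord0 j - x ord0 j| < rho) -> W w.

Definition rat_obox (pq : 'rV[rat]_d * 'rV[rat]_d) : set V :=
  obox (map_mx ratr pq.1) (map_mx ratr pq.2).

Lemma rat_obox_near (x : V) (rho : R) : 0 < rho ->
  exists pq, rat_obox pq x /\
    forall w, rat_obox pq w -> forall j, `|w ord0 j - x ord0 j| < rho.
Proof.
move=> rho0.
have /choice[p xp] j : exists q : rat, x ord0 j - rho < ratr q < x ord0 j.
  have : x ord0 j - rho < x ord0 j by lra.
  by move=> /rat_in_itvoo[q]; rewrite in_itv /=; exists q.
have /choice[q xq] j : exists q : rat, x ord0 j < ratr q < x ord0 j + rho.
  have : x ord0 j < x ord0 j + rho by lra.
  by move=> /rat_in_itvoo[q]; rewrite in_itv /=; exists q.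
exists (\row_j p j, \row_j q j); split => [j|w pqw j]; rewrite /= ?mxE.
  by have /andP[? ?] := xp j; have /andP[? ?] := xq j; split.
have [] := pqw j; rewrite /= !mxE => ? ?.
have /andP[? ?] := xp j; have /andP[? ?] := xq j.
by rewrite ltr_norml; apply/andP; split; lra.
Qed.

Lemma cube_openI (A B : set V) :
  cube_open A -> cube_open B -> cube_open (A `&` B).
Proof.
move=> oA oB x [Ax Bx].
have [rA rA0 nearA] := oA x Ax; have [rB rB0 nearB] := oB x Bx.
exists (Num.min rA rB); first by rewrite lt_min rA0 rB0.
by move=> w wx; split; [apply: nearA | apply: nearB] => j;
  apply: lt_le_trans (wx j) _; rewrite ge_min lexx ?orbT.
Qed.

Lemma eballC (x y : V) (r : R) : eball x r y = eball y r x.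
Proof.
rewrite /eball /= /Defs.edist; congr (Num.sqrt _ < r).
by apply: eq_bigr => j _; rewrite -sqrrN opprB.
Qed.

Lemma eball_center (x : V) (r : R) : 0 < r -> eball x r x.
Proof.
by rewrite /eball /= /Defs.edist big1 ?sqrtr0 // => j _; rewrite subrr expr0n.
Qed.

Lemma eballE (x y : V) (r : R) : 0 < r ->
  eball x r y = (\sum_j (y ord0 j - x ord0 j) ^+ 2 < r ^+ 2).
Proof.
move=> r0; rewrite /eball /= /Defs.edist -{1}(ger0_norm (ltW r0)) -sqrtr_sqr.
by rewrite ltr_sqrt // exprn_gt0.
Qed.

Lemma cube_open_eball (y : V) (r : R) : 0 < r -> cube_open (eball y r).
Proof.
move=> r0 x; rewrite eballE // => yx.
set s := \sum_j _ in yx.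
pose C := \sum_j (2 * `|x ord0 j - y ord0 j| + 1).
have C0 : 0 <= C by apply: sumr_ge0 => j _; rewrite addr_ge0 ?mulr_ge0.
pose q := (r ^+ 2 - s) / (C + 1).
have q0 : 0 < q by rewrite divr_gt0 ?subr_gt0 // ltr_wpDl.
have qC : q * C < r ^+ 2 - s.
  rewrite [X in _ < X](_ : _ = q * (C + 1)) ?ltr_pM2l ?ltrDl //.
  by rewrite /q; field; lra.
exists (Num.min 1 q) => [|w xw]; first by rewrite lt_min ltr01 q0.
rewrite eballE //; apply: le_lt_trans (_ : _ <= s + Num.min 1 q * C) _.
  rewrite /s /C mulr_sumr -big_split; apply: ler_sum => j _.
  rewrite (_ : w ord0 j - y ord0 j =
      (x ord0 j - y ord0 j) + (w ord0 j - x ord0 j)).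
    by apply: sqrD_le; [exact: xw | rewrite ge_min lexx].
  by ring.
have : Num.min 1 q * C <= q * C by rewrite ler_wpM2r // ge_min lexx orbT.
lra.
Qed.

End open_sets.

Section oscillation.
Variables (R : realType) (d : nat).
Local Notation V := 'rV[R]_d.

Definition osc_superlevel (D : set V) (r : R) (f : V -> R) (t : R) : set V :=
  [set x | exists y z,
    (eball x r `&` D) y /\ (eball x r `&` D) z /\ t < f y - f z].

Lemma osc_gtE (D : set V) (r : R) (f : V -> R) (t : R) (x : V) : 0 < r -> D x ->
  (t%:E < osc D r f x)%E <-> osc_superlevel D r f t x.
Proof.
move=> r0 Dx; apply: lte_sup_sub_inf.
by exists x; split => //; exact: eball_center.
Qed.

Lemma cube_open_osc_superlevel (D : set V) (r : R) (f : V -> R) (t : R) :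
  0 < r -> cube_open (osc_superlevel D r f t).
Proof.
move=> r0 x [y [z [[xy Dy] [[xz Dz] tyz]]]].
have xyz : (eball y r `&` eball z r) x by split; rewrite eballC.
have [rho rho0 near] :=
  cube_openI (cube_open_eball (y := y) r0) (cube_open_eball (y := z) r0) xyz.
exists rho => // w /near[wy wz]; exists y, z.
by do !split; rewrite // eballC.
Qed.

End oscillation.

Section measurable_oscillation.
Variables (R : realType) (n : nat).
Local Notation V := 'rV[R]_n.+1.
Local Notation mu := (@lebesgue_outer R n.+1).

Lemma cube_open_measurable (W : set V) : cube_open W -> mu.-cara.-measurable W.
Proof.
move=> oW.
have -> : W = \bigcup_(pq in [set pq | rat_obox pq `<=` W]) rat_obox pq.
  apply/seteqP; split => [x Wx|x [pq sub /sub //]].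
  have [rho rho0 nearW] := oW x Wx.
  have [pq [pqx near]] := rat_obox_near x rho0.
  by exists pq => // w /near; exact: nearW.
rewrite bigcup_mkcond; apply: countable_bigcupT_measurable.
  exact: countableP.
by move=> pq; case: ifP => _; [exact: obox_measurable | exact: measurable0].
Qed.

Lemma measurable_osc (D : set V) (r : R) (f : V -> R) : 0 < r ->
  measurable_fun (D : set (caratheodory_type mu)) (osc D r f).
Proof.
move=> r0 mD; apply: (measurability _ (ErealGenOInfty.measurableE R) _ mD).
move=> _ [_ [t ->] <-].
have -> : D `&` osc D r f @^-1` `]t%:E, +oo[ = D `&` osc_superlevel D r f t.
  apply/seteqP; split => x [Dx]; rewrite /= in_itv /= andbT => ?;
    by split => //; apply/(osc_gtE _ _ r0 Dx).
exact/measurableI/cube_open_measurable/cube_open_osc_superlevel.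
Qed.

End measurable_oscillation.

Theorem lemma1 (R : realType) (d : nat) (hd : (1 <= d)%N)
  (D : set 'rV[R]_d) (hD : Lmeasurable D) (r : R) (hr : 0 < r)
  (f : 'rV[R]_d -> R) :
  forall B : set (\bar R), measurable B ->
    Lmeasurable (D `&` (osc D r f) @^-1` B).
Proof.
case: d hd D hD f => [//|n] _ D hD f.
exact: measurable_osc hr hD.
Qed.
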